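(* Fix $\beta>0$ and $\delta\in(0,\pi)$. Let $\rho_\varepsilon(\varphi)$ and $d_\varepsilon(\varphi)$ be families of real $2\pi$-periodic functions, depending smoothly on $(\varepsilon,\varphi)$, such that for every $\varepsilon$ and every $\bar\varphi$ $$\int_{\bar\varphi-d_\varepsilon(\bar\varphi)}^{\bar\varphi+d_\varepsilon(\bar\varphi)}\rho_\varepsilon(\xi)e^{i\xi}\,d\xi=\frac{2}{\beta}\sin\big(\delta+d_\varepsilon(\bar\varphi)\big)e^{i\bar\varphi},$$ and such that $\rho_0\equiv1$ and $d_0$ is a constant. Let $\rho_1=\frac{d}{d\varepsilon}\big|_{\varepsilon=0}\rho_\varepsilon$ and $d_1=\frac{d}{d\varepsilon}\big|_{\varepsilon=0}d_\varepsilon$. Then: (a) $\beta\sin d_0=\sin(\delta+d_0)$; (b) the Fourier coefficients $\widehat{\rho}_{1n}$ of $\rho_1$ and $\widehat{d}_{1n}$ of $d_1$ all vanish except for those $n$ which satisfy the Gutkin relation $n\tan(d_0)=\tan(nd_0)$.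
   Context: The displayed equation is the analytic form of the $\delta$-Gutkin property of a magnetic billiard (Larmor radius $1/\beta$) whose boundary has radius of curvature $\rho$ as a function of the tangent angle; $\rho_0\equiv 1$, $d_0$ constant corresponds to the unit circle. *)

From Stdlib Require Import Reals Lra.
From Coquelicot Require Import Coquelicot.
Open Scope R_scope.

Fixpoint Ck_on (U : R -> R -> Prop) (k : nat) (f : R -> R -> R) : Prop :=
  (forall x y, U x y -> continuous (fun p : R * R => f (fst p) (snd p)) (x, y)) /\
  match k with
  | O => True
  | S k' => exists fx fy : R -> R -> R,
      (forall x y, U x y ->
         is_derive (fun t => f t y) x (fx x y) /\
         is_derive (fun t => f x t) y (fy x y)) /\
      Ck_on U k' fx /\ Ck_on U k' fy
  end.

Definition smooth_on (U : R -> R -> Prop) (f : R -> R -> R) : Prop :=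
  forall k, Ck_on U k f.

(* n-th complex Fourier coefficient of a 2pi-periodic real function,
   (1/2pi) int_0^{2pi} f(x) e^{-inx} dx, as an element of Coquelicot's C. *)
Definition fourier_coef (f : R -> R) (n : Z) : C :=
  ( / (2 * PI) * RInt (fun x => f x * cos (IZR n * x)) 0 (2 * PI),
    - / (2 * PI) * RInt (fun x => f x * sin (IZR n * x)) 0 (2 * PI) ).

From Stdlib Require Import Reals Lra.
From Coquelicot Require Import Coquelicot.
Open Scope R_scope.

(* Differentiating the integral identity at [eps = 0] (Leibniz rule with moving
   limits) shows that [r = rho_1] and [q = d_1] satisfy the linear equation
     int_{phi - d0}^{phi + d0} r(xi) e^{i xi} dxi = K q(phi) e^{i phi},
     K = (2/beta) cos (delta + d0) - 2 cos d0,
   and [K <> 0] because [sin delta <> 0].  Integrating by parts against the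
   periodic test functions [cos (m x + c)] turns this equation into the Fourier
   relation [m K q_(m-1) = 2 sin (m d0) r_(m-1)].  Used at [m = n + 1] and, since
   [r] and [q] are real, at [m = 1 - n], it gives a 2x2 linear system for the
   [n]-th coefficients whose determinant is a nonzero multiple of
   [sin (n d0) cos d0 - n cos (n d0) sin d0]; this vanishes exactly when the
   Gutkin relation [n tan d0 = tan (n d0)] holds.  At [eps = 0] the identity
   itself reads [2 sin d0 = (2/beta) sin (delta + d0)], which is (a). *)

Ltac continuity_step :=
  match goal with
  | H : forall x, continuous ?h x |- continuous ?h _ => apply H
  | |- continuous cos _ => apply continuity_pt_filterlim, continuity_cos
  | |- continuous sin _ => apply continuity_pt_filterlim, continuity_sin
  | |- continuous (fun _ => ?c) _ => apply continuous_const
  | |- continuous (fun y => y) _ => apply continuous_id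
  | |- continuous (fun y => @?f y + @?g y) _ => apply (continuous_plus f g)
  | |- continuous (fun y => @?f y - @?g y) _ => apply (continuous_minus f g)
  | |- continuous (fun y => @?f y * @?g y) _ => apply (continuous_mult f g)
  | |- continuous (fun y => cos (@?f y)) _ =>
      apply (continuous_comp f cos); [| apply continuity_pt_filterlim, continuity_cos]
  | |- continuous (fun y => sin (@?f y)) _ =>
      apply (continuous_comp f sin); [| apply continuity_pt_filterlim, continuity_sin]
  | H : forall x, continuous ?h x |- continuous (fun y => ?h (@?f y)) _ =>
      apply (continuous_comp f h); [| apply H]
  end.

Ltac solve_continuous := intros; repeat continuity_step.

Lemma ex_RInt_continuous_R (f : R -> R) a b :
  (forall x, continuous f x) -> ex_RInt f a b.
Proof. intros Hf. apply (@ex_RInt_continuous R_CompleteNormedModule). intros; apply Hf. Qed.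

Lemma RInt_ext_R (f g : R -> R) a b : (forall x, f x = g x) -> RInt f a b = RInt g a b.
Proof. intros H. apply RInt_ext. intros; apply H. Qed.

Lemma RInt_Rplus (f g : R -> R) a b :
  (forall x, continuous f x) -> (forall x, continuous g x) ->
  RInt (fun x => f x + g x) a b = RInt f a b + RInt g a b.
Proof.
  intros Hf Hg. apply (RInt_plus f g); apply ex_RInt_continuous_R; assumption.
Qed.

Lemma RInt_Rminus (f g : R -> R) a b :
  (forall x, continuous f x) -> (forall x, continuous g x) ->
  RInt (fun x => f x - g x) a b = RInt f a b - RInt g a b.
Proof.
  intros Hf Hg. apply (RInt_minus f g); apply ex_RInt_continuous_R; assumption.
Qed.

Lemma RInt_Rscal (f : R -> R) k a b :
  (forall x, continuous f x) -> RInt (fun x => k * f x) a b = k * RInt f a b.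
Proof. intros Hf. apply (RInt_scal f). apply ex_RInt_continuous_R; assumption. Qed.

Lemma RInt_cos a b : RInt cos a b = sin b - sin a.
Proof.
  apply is_RInt_unique, (is_RInt_derive sin cos).
  - intros; apply is_derive_sin.
  - solve_continuous.
Qed.

Lemma RInt_shift (h : R -> R) c a b :
  (forall x, continuous h x) -> RInt (fun y => h (y + c)) a b = RInt h (a + c) (b + c).
Proof.
  intros Hh.
  replace (a + c) with (1 * a + c) by ring. replace (b + c) with (1 * b + c) by ring.
  rewrite <- RInt_comp_lin by (apply ex_RInt_continuous_R; assumption).
  apply RInt_ext_R. intros x. unfold scal; simpl; unfold mult; simpl.
  rewrite !Rmult_1_l; reflexivity.
Qed.

Lemma RInt_periodic_shift (h : R -> R) a :
  (forall x, continuous h x) -> (forall x, h (x + 2 * PI) = h x) ->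
  RInt (fun x => h (x + a)) 0 (2 * PI) = RInt h 0 (2 * PI).
Proof.
  intros Hh Hper. rewrite RInt_shift by assumption.
  assert (Hex : forall u v, ex_RInt h u v) by (intros; apply ex_RInt_continuous_R; assumption).
  assert (Htail : RInt h (2 * PI) (2 * PI + a) = RInt h 0 a).
  { replace (2 * PI) with (0 + 2 * PI) at 1 by ring.
    replace (2 * PI + a) with (a + 2 * PI) by ring.
    rewrite <- RInt_shift by assumption. apply RInt_ext_R, Hper. }
  rewrite Rplus_0_l.
  rewrite <- (RInt_Chasles h a (2 * PI) (2 * PI + a)) by apply Hex.
  rewrite <- (RInt_Chasles h a 0 (2 * PI)) by apply Hex.
  rewrite Htail, <- (opp_RInt_swap h 0 a) by apply Hex.
  unfold plus, opp; simpl. ring.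
Qed.

Lemma sin_plus_IZR_2PI (k : Z) x : sin (x + IZR k * (2 * PI)) = sin x.
Proof.
  assert (Hs : sin (IZR k * PI) = 0) by (apply sin_eq_0_1; exists k; reflexivity).
  assert (Hc2 : cos (IZR k * (2 * PI)) = 1).
  { replace (IZR k * (2 * PI)) with (2 * (IZR k * PI)) by ring.
    rewrite cos_2a_sin, Hs. ring. }
  assert (Hs2 : sin (IZR k * (2 * PI)) = 0).
  { replace (IZR k * (2 * PI)) with (2 * (IZR k * PI)) by ring.
    rewrite sin_2a, Hs. ring. }
  rewrite sin_plus, Hc2, Hs2. ring.
Qed.

Definition window_int (g : R -> R) (d x : R) : R := RInt g (x - d) (x + d).

Section Window.
Variables (g : R -> R) (d : R).
Hypothesis (Hg : forall x, continuous g x) (Hper : forall x, g (x + 2 * PI) = g x).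

Lemma is_derive_window_int x :
  is_derive (window_int g d) x (g (x + d) - g (x - d)).
Proof.
  assert (H := is_derive_RInt_bound_comp g (RInt g) (fun x => x - d) (fun x => x + d) 1 1 x).
  replace (g (x + d) - g (x - d)) with (minus (scal 1 (g (x + d))) (scal 1 (g (x - d))))
    by (unfold minus, plus, opp, scal; simpl; unfold mult; simpl; ring).
  apply H; try (apply Hg).
  - apply filter_forall. intros u. apply (@RInt_correct R_CompleteNormedModule).
    apply ex_RInt_continuous_R, Hg.
  - auto_derive; auto; ring.
  - auto_derive; auto; ring.
Qed.

Lemma continuous_window_int x : continuous (window_int g d) x.
Proof. apply (@ex_derive_continuous R_AbsRing R_NormedModule). eexists. apply is_derive_window_int. Qed.

Lemma window_int_periodic x : window_int g d (x + 2 * PI) = window_int g d x.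
Proof.
  unfold window_int.
  replace (x + 2 * PI - d) with (x - d + 2 * PI) by ring.
  replace (x + 2 * PI + d) with (x + d + 2 * PI) by ring.
  rewrite <- RInt_shift by exact Hg. apply RInt_ext_R, Hper.
Qed.

Lemma RInt_shifted_mul_sin (m : Z) a c :
  RInt (fun x => g (x + a) * sin (IZR m * x + c)) 0 (2 * PI)
  = RInt (fun x => g x * sin (IZR m * x - IZR m * a + c)) 0 (2 * PI).
Proof.
  rewrite <- (RInt_periodic_shift (fun x => g x * sin (IZR m * x - IZR m * a + c)) a).
  - apply RInt_ext_R. intros x. do 3 f_equal. ring.
  - solve_continuous.
  - intros u. rewrite Hper.
    replace (IZR m * (u + 2 * PI) - IZR m * a + c)
      with (IZR m * u - IZR m * a + c + IZR m * (2 * PI)) by ring.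
    rewrite sin_plus_IZR_2PI. reflexivity.
Qed.

Lemma RInt_window_int_parts (m : Z) c :
  IZR m * RInt (fun x => window_int g d x * cos (IZR m * x + c)) 0 (2 * PI)
  = RInt (fun x => g (x - d) * sin (IZR m * x + c)) 0 (2 * PI)
    - RInt (fun x => g (x + d) * sin (IZR m * x + c)) 0 (2 * PI).
Proof.
  set (M := IZR m). set (W := window_int g d).
  set (Y := fun x => W x * sin (M * x + c)).
  set (dY := fun x => g (x + d) * sin (M * x + c) - g (x - d) * sin (M * x + c)
                      + M * (W x * cos (M * x + c))).
  assert (HW : forall x, continuous W x) by exact continuous_window_int.
  assert (HdY : forall x, is_derive Y x (dY x)).
  { intros x.
    assert (Hs : is_derive (fun x => sin (M * x + c)) x (M * cos (M * x + c)))
      by (auto_derive; auto; ring).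
    assert (H := is_derive_mult W _ x _ _ (is_derive_window_int x) Hs (fun _ _ => Rmult_comm _ _)).
    replace (dY x) with (plus (mult (g (x + d) - g (x - d)) (sin (M * x + c)))
                              (mult (W x) (M * cos (M * x + c))))
      by (unfold dY, plus, mult; simpl; unfold mult; simpl; ring).
    exact H. }
  assert (Hperiod : RInt dY 0 (2 * PI) = 0).
  { rewrite (is_RInt_unique dY 0 (2 * PI) (minus (Y (2 * PI)) (Y 0))).
    - unfold Y, minus, plus, opp; simpl.
      replace (2 * PI) with (0 + 2 * PI) at 1 by ring.
      replace (M * (2 * PI) + c) with (M * 0 + c + IZR m * (2 * PI)) by (unfold M; ring).
      unfold W. rewrite window_int_periodic, sin_plus_IZR_2PI. ring.
    - apply (is_RInt_derive Y dY).
      + intros; apply HdY.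
      + unfold dY. solve_continuous. }
  unfold dY in Hperiod.
  rewrite RInt_Rplus, RInt_Rminus, RInt_Rscal in Hperiod by solve_continuous.
  lra.
Qed.

Lemma RInt_window_int_cos (m : Z) c :
  IZR m * RInt (fun x => window_int g d x * cos (IZR m * x + c)) 0 (2 * PI)
  = 2 * sin (IZR m * d) * RInt (fun x => g x * cos (IZR m * x + c)) 0 (2 * PI).
Proof.
  rewrite RInt_window_int_parts, (RInt_shifted_mul_sin m (- d)), (RInt_shifted_mul_sin m d),
    <- RInt_Rminus, <- RInt_Rscal by solve_continuous.
  apply RInt_ext_R. intros x.
  replace (IZR m * x - IZR m * - d + c) with (IZR m * x + c + IZR m * d) by ring.
  replace (IZR m * x - IZR m * d + c) with (IZR m * x + c - IZR m * d) by ring.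
  rewrite sin_plus, sin_minus. ring.
Qed.

End Window.

Lemma gutkin_determinant_neq0 (N d : R) :
  N * tan d <> tan (N * d) -> sin (N * d) * cos d - N * cos (N * d) * sin d <> 0.
Proof.
  intros Hgutkin Hdet. apply Hgutkin. unfold tan.
  assert (Hd := sin2_cos2 d). assert (HNd := sin2_cos2 (N * d)). unfold Rsqr in Hd, HNd.
  destruct (Req_dec (cos d) 0) as [Hcd | Hcd].
  - (* [tan] is [0] wherever [cos] vanishes, since [/ 0 = 0] *)
    rewrite Hcd in Hdet, Hd |- *. rewrite Rdiv_0_r, Rmult_0_r.
    assert (HN : N * cos (N * d) = 0).
    { rewrite <- (Rmult_1_r (N * cos (N * d))).
      replace 1 with (sin d * sin d) by lra.
      replace (N * cos (N * d) * (sin d * sin d))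
        with (- (sin (N * d) * 0 - N * cos (N * d) * sin d) * sin d) by ring.
      rewrite Hdet. ring. }
    destruct (Rmult_integral _ _ HN) as [-> | ->].
    + rewrite Rmult_0_l, sin_0. unfold Rdiv. ring.
    + rewrite Rdiv_0_r. reflexivity.
  - destruct (Req_dec (cos (N * d)) 0) as [HcNd | HcNd].
    + exfalso. rewrite HcNd in Hdet, HNd.
      assert (sin (N * d) = 0) by (apply (Rmult_eq_reg_r (cos d)); lra).
      nra.
    + field_simplify_eq; auto. lra.
Qed.

Lemma gutkin_elimination (N K d A B : R) :
  K <> 0 -> N * tan d <> tan (N * d) ->
  (N + 1) * K * B = 2 * sin ((N + 1) * d) * A ->
  (1 - N) * K * B = 2 * sin ((1 - N) * d) * A ->
  A = 0 /\ B = 0.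
Proof.
  intros HK Hgutkin Hplus Hminus.
  assert (Hsplus : sin ((N + 1) * d) = sin (N * d) * cos d + cos (N * d) * sin d)
    by (rewrite <- sin_plus; f_equal; ring).
  assert (Hsminus : sin ((1 - N) * d) = sin d * cos (N * d) - cos d * sin (N * d))
    by (rewrite <- sin_minus; f_equal; ring).
  assert (HA : A = 0).
  { assert (HAX : A * (sin (N * d) * cos d - N * cos (N * d) * sin d) = 0).
    { replace (A * (sin (N * d) * cos d - N * cos (N * d) * sin d))
        with (((1 - N) * (2 * sin ((N + 1) * d) * A) - (N + 1) * (2 * sin ((1 - N) * d) * A)) / 4)
        by (rewrite Hsplus, Hsminus; field).
      rewrite <- Hplus, <- Hminus. field. }
    destruct (Rmult_integral _ _ HAX) as [| Hdet]; [assumption |].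
    contradiction (gutkin_determinant_neq0 N d Hgutkin). }
  split; [assumption |].
  assert (HKB : K * B = 0).
  { replace (K * B) with (((N + 1) * K * B + (1 - N) * K * B) / 2) by field.
    rewrite Hplus, Hminus, HA. field. }
  destruct (Rmult_integral _ _ HKB); [contradiction | assumption].
Qed.

Lemma fourier_coef_eq0 (f : R -> R) (n : Z) :
  (forall c, RInt (fun x => f x * cos (IZR n * x + c)) 0 (2 * PI) = 0) ->
  fourier_coef f n = 0%C.
Proof.
  intros Horth. unfold fourier_coef.
  rewrite (RInt_ext_R (fun x => f x * cos (IZR n * x)) (fun x => f x * cos (IZR n * x + 0))),
    (RInt_ext_R (fun x => f x * sin (IZR n * x)) (fun x => f x * cos (IZR n * x + - (PI / 2)))),
    !Horth.
  - unfold RtoC. f_equal; ring.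
  - intros x. rewrite cos_plus, cos_neg, sin_neg, cos_PI2, sin_PI2. ring.
  - intros x. rewrite Rplus_0_r. reflexivity.
Qed.

Section LinearizedWindowEquation.
Variables (r q : R -> R) (K d : R).
Hypotheses (Hr : forall x, continuous r x) (Hq : forall x, continuous q x)
  (Hr_per : forall x, r (x + 2 * PI) = r x)
  (Hwin_cos : forall x, window_int (fun t => r t * cos t) d x = K * q x * cos x)
  (Hwin_sin : forall x, window_int (fun t => r t * sin t) d x = K * q x * sin x).

Lemma linearized_fourier_relation (n : Z) c :
  (IZR n + 1) * K * RInt (fun x => q x * cos (IZR n * x + c)) 0 (2 * PI)
  = 2 * sin ((IZR n + 1) * d) * RInt (fun x => r x * cos (IZR n * x + c)) 0 (2 * PI).
Proof.
  set (M := IZR n + 1).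
  assert (Htrig : forall x, cos (IZR n * x + c)
                   = cos x * cos (M * x + c) + sin x * cos (M * x + (c - PI / 2))).
  { intros x.
    replace (M * x + (c - PI / 2)) with (M * x + c - PI / 2) by ring.
    replace (IZR n * x + c) with (M * x + c - x) by (unfold M; ring).
    rewrite !cos_minus, cos_PI2, sin_PI2. ring. }
  assert (Hc := RInt_window_int_cos (fun t => r t * cos t) d ltac:(solve_continuous)
                 ltac:(intros; cbv beta; rewrite Hr_per, cos_plus, cos_2PI, sin_2PI; ring) (n + 1) c).
  assert (Hs := RInt_window_int_cos (fun t => r t * sin t) d ltac:(solve_continuous)
                 ltac:(intros; cbv beta; rewrite Hr_per, sin_plus, cos_2PI, sin_2PI; ring)
                 (n + 1) (c - PI / 2)).
  rewrite plus_IZR in Hc, Hs. fold M in Hc, Hs.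
  assert (Hwin_c : forall x, continuous (window_int (fun t => r t * cos t) d) x)
    by (apply continuous_window_int; solve_continuous).
  assert (Hwin_s : forall x, continuous (window_int (fun t => r t * sin t) d) x)
    by (apply continuous_window_int; solve_continuous).
  assert (Hq_split : K * RInt (fun x => q x * cos (IZR n * x + c)) 0 (2 * PI)
     = RInt (fun x => window_int (fun t => r t * cos t) d x * cos (M * x + c)) 0 (2 * PI)
       + RInt (fun x => window_int (fun t => r t * sin t) d x * cos (M * x + (c - PI / 2)))
           0 (2 * PI)).
  { rewrite <- RInt_Rscal, <- RInt_Rplus by solve_continuous.
    apply RInt_ext_R. intros x. rewrite Hwin_cos, Hwin_sin, Htrig. ring. }
  assert (Hr_split : RInt (fun x => r x * cos (IZR n * x + c)) 0 (2 * PI)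
     = RInt (fun x => r x * cos x * cos (M * x + c)) 0 (2 * PI)
       + RInt (fun x => r x * sin x * cos (M * x + (c - PI / 2))) 0 (2 * PI)).
  { rewrite <- RInt_Rplus by solve_continuous.
    apply RInt_ext_R. intros x. rewrite Htrig. ring. }
  rewrite Rmult_assoc, Hq_split, Rmult_plus_distr_l, Hc, Hs, Hr_split. ring.
Qed.

Lemma linearized_fourier_coef_eq0 (n : Z) :
  K <> 0 -> IZR n * tan d <> tan (IZR n * d) ->
  fourier_coef r n = 0%C /\ fourier_coef q n = 0%C.
Proof.
  intros HK Hgutkin.
  assert (Horth : forall c, RInt (fun x => r x * cos (IZR n * x + c)) 0 (2 * PI) = 0
                       /\ RInt (fun x => q x * cos (IZR n * x + c)) 0 (2 * PI) = 0).
  { intros c. apply (gutkin_elimination (IZR n) K d); try assumption.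
    - apply linearized_fourier_relation.
    - assert (Hflip : forall f : R -> R,
                 RInt (fun x => f x * cos (IZR (- n) * x + - c)) 0 (2 * PI)
                 = RInt (fun x => f x * cos (IZR n * x + c)) 0 (2 * PI)).
      { intros f. apply RInt_ext_R. intros x.
        rewrite <- cos_neg, opp_IZR. do 2 f_equal. ring. }
      rewrite <- (Hflip q), <- (Hflip r).
      replace (1 - IZR n) with (IZR (- n) + 1) by (rewrite opp_IZR; ring).
      exact (linearized_fourier_relation (- n) (- c)). }
  split; apply fourier_coef_eq0; intros c.
  - exact (proj1 (Horth c)).
  - exact (proj2 (Horth c)).
Qed.

End LinearizedWindowEquation.

Definition jointly_continuous_on (U : R -> R -> Prop) (f : R -> R -> R) : Prop :=
  forall x y, U x y -> continuous (fun p : R * R => f (fst p) (snd p)) (x, y).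

Definition partial_C1_on (U : R -> R -> Prop) (f f1 : R -> R -> R) : Prop :=
  jointly_continuous_on U f /\
  (forall x y, U x y -> is_derive (fun z => f z y) x (f1 x y)) /\
  jointly_continuous_on U f1.

Lemma Ck_on_1_partial_C1 U f : Ck_on U 1 f -> exists f1, partial_C1_on U f f1.
Proof.
  intros [Hf [f1 [f2 [Hd [[Hf1 _] _]]]]]. exists f1.
  split; [exact Hf | split; [| exact Hf1]]. intros x y Hxy. apply Hd, Hxy.
Qed.

Lemma jointly_continuous_slice U f x y :
  jointly_continuous_on U f -> U x y -> continuous (f x) y.
Proof.
  intros Hf Hxy. apply (continuous_comp_2 (fun _ => x) (fun t => t) f y).
  - apply continuous_const.
  - apply continuous_id.
  - apply Hf, Hxy.
Qed.

Lemma partial_C1_on_mult_r U f f1 (s : R -> R) :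
  partial_C1_on U f f1 -> (forall x, continuous s x) ->
  partial_C1_on U (fun e t => f e t * s t) (fun e t => f1 e t * s t).
Proof.
  intros [Hf [Hd Hf1]] Hs.
  assert (Hmult : forall g, jointly_continuous_on U g ->
            jointly_continuous_on U (fun e t => g e t * s t)).
  { intros g Hg x y Hxy.
    apply (continuous_mult (fun p : R * R => g (fst p) (snd p)) (fun p => s (snd p))).
    - apply Hg, Hxy.
    - apply (continuous_comp snd s); [apply continuous_snd | apply Hs]. }
  split; [apply Hmult, Hf | split; [| apply Hmult, Hf1]].
  intros x y Hxy. apply (is_derive_scal_l (fun z => f z y) x (f1 x y) (s y)), Hd, Hxy.
Qed.

Lemma locally_0_of_interval (eps0 : R) (P : R -> Prop) :
  0 < eps0 -> (forall e, - eps0 < e < eps0 -> P e) -> locally 0 P.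
Proof.
  intros Heps0 HP. exists (mkposreal eps0 Heps0). intros e He. apply HP.
  change (Rabs (e - 0) < eps0) in He. apply Rabs_lt_between in He. lra.
Qed.

Section Leibniz.
Variables (eps0 : R) (f f1 : R -> R -> R).
Hypotheses (Heps0 : 0 < eps0) (Hf : partial_C1_on (fun e _ => - eps0 < e < eps0) f f1).

Lemma partial_C1_Derive e t : - eps0 < e < eps0 -> Derive (fun z => f z t) e = f1 e t.
Proof. intros He. apply is_derive_unique. apply Hf, He. Qed.

Lemma ex_RInt_slice e a b : - eps0 < e < eps0 -> ex_RInt (f e) a b.
Proof.
  intros He. apply ex_RInt_continuous_R. intros t.
  apply (jointly_continuous_slice (fun e _ => - eps0 < e < eps0)); [apply Hf | exact He].
Qed.

Lemma continuity_2d_pt_partial_Derive x t :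
  - eps0 < x < eps0 -> continuity_2d_pt (fun u v => Derive (fun z => f z v) u) x t.
Proof.
  intros Hx. apply continuity_2d_pt_ext_loc with (f := f1).
  - assert (Hpos : 0 < Rmin (eps0 - x) (x + eps0)) by (apply Rmin_case; lra).
    exists (mkposreal _ Hpos). intros u v Hu _. simpl in Hu.
    apply Rabs_lt_between in Hu.
    assert (Rmin (eps0 - x) (x + eps0) <= eps0 - x) by apply Rmin_l.
    assert (Rmin (eps0 - x) (x + eps0) <= x + eps0) by apply Rmin_r.
    symmetry. apply partial_C1_Derive. lra.
  - apply continuity_2d_pt_filterlim. apply Hf, Hx.
Qed.

Lemma is_derive_RInt_param_moving (a b : R -> R) da db :
  is_derive a 0 da -> is_derive b 0 db ->
  is_derive (fun e => RInt (f e) (a e) (b e)) 0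
    (RInt (f1 0) (a 0) (b 0) - f 0 (a 0) * da + f 0 (b 0) * db).
Proof.
  intros Ha Hb.
  assert (H0 : - eps0 < 0 < eps0) by lra.
  assert (Hex : forall c c', locally 0 (fun e => ex_RInt (f e) c c'))
    by (intros; apply (locally_0_of_interval eps0); [exact Heps0 | intros; apply ex_RInt_slice; assumption]).
  assert (H2d : forall c, locally_2d
             (fun x' t => continuity_2d_pt (fun u v => Derive (fun z => f z v) u) x' t) 0 c).
  { intros c. exists (mkposreal eps0 Heps0). intros u v Hu _. simpl in Hu.
    apply Rabs_lt_between in Hu. apply continuity_2d_pt_partial_Derive. lra. }
  assert (Hslice : forall t, continuity_pt (f 0) t).
  { intros t. apply continuity_pt_filterlim.
    apply (jointly_continuous_slice (fun e _ => - eps0 < e < eps0)); [apply Hf | exact H0]. }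
  rewrite (RInt_ext_R (f1 0) (fun t => Derive (fun u => f u t) 0))
    by (intros; symmetry; apply partial_C1_Derive, H0).
  replace (RInt (fun t => Derive (fun u => f u t) 0) (a 0) (b 0) - f 0 (a 0) * da + f 0 (b 0) * db)
    with (RInt (fun t => Derive (fun u => f u t) 0) (a 0) (b 0) + - f 0 (a 0) * da + f 0 (b 0) * db)
    by ring.
  apply is_derive_RInt_param_bound_comp; try assumption; try apply Hslice; try apply H2d.
  - apply Hex.
  - exists (mkposreal 1 Rlt_0_1). apply Hex.
  - exists (mkposreal 1 Rlt_0_1). apply Hex.
  - exists (mkposreal 1 Rlt_0_1). apply (locally_0_of_interval eps0); [exact Heps0 |].
    intros e He t _. eexists. apply Hf, He.
  - intros t _. apply continuity_2d_pt_partial_Derive, H0.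
Qed.

End Leibniz.

Lemma linearize_window_identity (eps0 : R) (f f1 : R -> R -> R) (D F : R -> R) (q F' phi : R) :
  0 < eps0 -> partial_C1_on (fun e _ => - eps0 < e < eps0) f f1 ->
  is_derive D 0 q -> is_derive F (D 0) F' ->
  (forall e, - eps0 < e < eps0 -> RInt (f e) (phi - D e) (phi + D e) = F (D e)) ->
  window_int (f1 0) (D 0) phi + (f 0 (phi + D 0) + f 0 (phi - D 0)) * q = F' * q.
Proof.
  intros Heps0 Hf HD HF Hid.
  (* [auto_derive] leaves [Derive (fun x => D x) 0] with a binder typed in [R_AbsRing] *)
  assert (Hlo : is_derive (fun e => phi - D e) 0 (- q)).
  { auto_derive; [exists q; exact HD | change (Derive (fun x => D x) 0) with (Derive D 0);
                 rewrite (is_derive_unique D 0 q HD); ring]. }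
  assert (Hhi : is_derive (fun e => phi + D e) 0 q).
  { auto_derive; [exists q; exact HD | change (Derive (fun x => D x) 0) with (Derive D 0);
                 rewrite (is_derive_unique D 0 q HD); ring]. }
  assert (Hlhs := is_derive_RInt_param_moving eps0 f f1 Heps0 Hf _ _ _ _ Hlo Hhi).
  assert (Hrhs : is_derive (fun e => F (D e)) 0 (q * F')) by exact (is_derive_comp F D 0 F' q HF HD).
  apply (is_derive_ext_loc _ (fun e => F (D e))) in Hlhs;
    [| apply (locally_0_of_interval eps0); assumption].
  apply is_derive_unique in Hlhs. apply is_derive_unique in Hrhs.
  assert (E : RInt (f1 0) (phi - D 0) (phi + D 0) - f 0 (phi - D 0) * - q + f 0 (phi + D 0) * q
              = q * F') by (rewrite <- Hlhs, <- Hrhs; reflexivity).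
  unfold window_int. lra.
Qed.

Lemma Derive_param_continuous (eps0 : R) (f : R -> R -> R) :
  Ck_on (fun e _ => - eps0 < e < eps0) 1 f -> 0 < eps0 ->
  forall x, continuous (fun t => Derive (fun e => f e t) 0) x.
Proof.
  intros Hf Heps0 x. destruct (Ck_on_1_partial_C1 _ _ Hf) as [f1 Hf1].
  assert (H0 : - eps0 < 0 < eps0) by lra.
  apply (continuous_ext (f1 0)).
  - intros t. symmetry. apply (partial_C1_Derive eps0 f f1 Hf1 0 t H0).
  - apply (jointly_continuous_slice (fun e _ => - eps0 < e < eps0)); [apply Hf1 | exact H0].
Qed.

Lemma Derive_param_periodic (eps0 T : R) (f : R -> R -> R) phi :
  0 < eps0 -> (forall e phi, - eps0 < e < eps0 -> f e (phi + T) = f e phi) ->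
  Derive (fun e => f e (phi + T)) 0 = Derive (fun e => f e phi) 0.
Proof.
  intros Heps0 Hper. apply Derive_ext_loc, (locally_0_of_interval eps0); [exact Heps0 |].
  intros; apply Hper; assumption.
Qed.

Lemma unperturbed_radius_relation (beta delta d0 : R) (rho0 : R -> R) :
  0 < beta -> (forall phi, rho0 phi = 1) ->
  RInt (fun xi => rho0 xi * cos xi) (0 - d0) (0 + d0) = 2 / beta * sin (delta + d0) * cos 0 ->
  beta * sin d0 = sin (delta + d0).
Proof.
  intros Hbeta Hrho0 Hid.
  rewrite (RInt_ext_R _ cos), RInt_cos, cos_0 in Hid by (intros; rewrite Hrho0; ring).
  replace (0 + d0) with d0 in Hid by ring. replace (0 - d0) with (- d0) in Hid by ring.
  rewrite sin_neg in Hid.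
  apply (Rmult_eq_reg_l (2 / beta)); [| apply Rgt_not_eq, Rdiv_lt_0_compat; lra].
  replace (2 / beta * (beta * sin d0)) with (2 * sin d0) by (field; lra). lra.
Qed.

Lemma linearized_coefficient_neq0 (beta delta d0 : R) :
  0 < beta -> 0 < delta < PI -> beta * sin d0 = sin (delta + d0) ->
  2 / beta * cos (delta + d0) - 2 * cos d0 <> 0.
Proof.
  intros Hbeta Hdelta Hradius HK.
  assert (Hcos : cos (delta + d0) = beta * cos d0).
  { apply (Rmult_eq_reg_l (2 / beta)); [| apply Rgt_not_eq, Rdiv_lt_0_compat; lra].
    replace (2 / beta * (beta * cos d0)) with (2 * cos d0) by (field; lra). lra. }
  assert (Hsin : sin delta = sin (delta + d0) * cos d0 - cos (delta + d0) * sin d0)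
    by (rewrite <- sin_minus; f_equal; ring).
  rewrite Hcos, <- Hradius in Hsin.
  assert (0 < sin delta) by (apply sin_gt_0; lra).
  lra.
Qed.

Lemma first_order_window_identity (beta delta eps0 d0 : R) (rho d : R -> R -> R) (s : R -> R) :
  0 < eps0 -> Ck_on (fun e _ => - eps0 < e < eps0) 1 rho ->
  (forall phi, ex_derive (fun e => d e phi) 0) ->
  (forall phi, rho 0 phi = 1) -> (forall phi, d 0 phi = d0) ->
  (forall x, continuous s x) -> (forall a x, s (x + a) + s (x - a) = 2 * cos a * s x) ->
  (forall e phi, - eps0 < e < eps0 ->
     RInt (fun t => rho e t * s t) (phi - d e phi) (phi + d e phi)
     = 2 / beta * sin (delta + d e phi) * s phi) ->
  forall phi, window_int (fun t => Derive (fun e => rho e t) 0 * s t) d0 phi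
    = (2 / beta * cos (delta + d0) - 2 * cos d0) * Derive (fun e => d e phi) 0 * s phi.
Proof.
  intros Heps0 Hrho Hd Hrho0 Hd0 Hs Hsum Hid phi.
  destruct (Ck_on_1_partial_C1 _ _ Hrho) as [rho1 Hrho1].
  assert (H0 : - eps0 < 0 < eps0) by lra.
  assert (HF : is_derive (fun x => 2 / beta * sin (delta + x) * s phi) (d 0 phi)
                 (2 / beta * cos (delta + d0) * s phi))
    by (rewrite Hd0; auto_derive; [exact I | ring]).
  assert (H := linearize_window_identity eps0 _ _ (fun e => d e phi) _
                 (Derive (fun e => d e phi) 0) _ phi Heps0
                 (partial_C1_on_mult_r _ _ _ s Hrho1 Hs) (Derive_correct _ _ (Hd phi)) HF
                 (fun e He => Hid e phi He)).
  cbv beta in H. rewrite Hd0, !Hrho0, !Rmult_1_l, Hsum in H.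
  unfold window_int in *.
  rewrite (RInt_ext_R _ (fun t => rho1 0 t * s t))
    by (intros; rewrite (partial_C1_Derive eps0 rho rho1 Hrho1 0 _ H0); reflexivity).
  lra.
Qed.

Theorem proposition3p4
  (beta delta : R) (hbeta : 0 < beta) (hdelta : 0 < delta < PI)
  (eps0 : R) (heps0 : 0 < eps0)
  (rho d : R -> R -> R)   (* rho eps phi = rho_eps(phi), d eps phi = d_eps(phi) *)
  (hrho_smooth : smooth_on (fun e _ => - eps0 < e < eps0) rho)
  (hd_smooth : smooth_on (fun e _ => - eps0 < e < eps0) d)
  (hrho_per : forall e phi, - eps0 < e < eps0 -> rho e (phi + 2 * PI) = rho e phi)
  (hd_per : forall e phi, - eps0 < e < eps0 -> d e (phi + 2 * PI) = d e phi)
  (* real and imaginary parts of the integral identity *)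
  (hint_re : forall e phib, - eps0 < e < eps0 ->
     RInt (fun xi => rho e xi * cos xi) (phib - d e phib) (phib + d e phib)
     = 2 / beta * sin (delta + d e phib) * cos phib)
  (hint_im : forall e phib, - eps0 < e < eps0 ->
     RInt (fun xi => rho e xi * sin xi) (phib - d e phib) (phib + d e phib)
     = 2 / beta * sin (delta + d e phib) * sin phib)
  (hrho0 : forall phi, rho 0 phi = 1)
  (d0 : R) (hd0 : forall phi, d 0 phi = d0) :
  beta * sin d0 = sin (delta + d0) /\
  (forall n : Z, IZR n * tan d0 <> tan (IZR n * d0) ->
     fourier_coef (fun phi => Derive (fun e => rho e phi) 0) n = 0%C /\
     fourier_coef (fun phi => Derive (fun e => d e phi) 0) n = 0%C).
Proof.
  assert (H0 : - eps0 < 0 < eps0) by lra.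
  assert (Hradius : beta * sin d0 = sin (delta + d0)).
  { assert (Hid := hint_re 0 0 H0). rewrite !hd0 in Hid.
    exact (unperturbed_radius_relation beta delta d0 (rho 0) hbeta hrho0 Hid). }
  split; [exact Hradius |]. intros n Hgutkin.
  assert (Hd_ex : forall phi, ex_derive (fun e => d e phi) 0).
  { intros phi. destruct (Ck_on_1_partial_C1 _ _ (hd_smooth 1%nat)) as [d1 [_ [Hd1 _]]].
    eexists. apply Hd1, H0. }
  apply (linearized_fourier_coef_eq0 _ _ (2 / beta * cos (delta + d0) - 2 * cos d0) d0).
  - apply (Derive_param_continuous eps0); [apply hrho_smooth | exact heps0].
  - apply (Derive_param_continuous eps0); [apply hd_smooth | exact heps0].
  - intros phi. apply (Derive_param_periodic eps0); assumption.
  - apply (first_order_window_identity beta delta eps0 d0 rho d cos); try assumption.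
    + apply hrho_smooth.
    + solve_continuous.
    + intros a x. rewrite cos_plus, cos_minus. ring.
  - apply (first_order_window_identity beta delta eps0 d0 rho d sin); try assumption.
    + apply hrho_smooth.
    + solve_continuous.
    + intros a x. rewrite sin_plus, sin_minus. ring.
  - apply linearized_coefficient_neq0; assumption.
  - exact Hgutkin.
Qed.
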